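(* Consider a standard Nash equilibrium problem (NEP) with $N$ players in which player $\nu$ solves $\min_{x^\nu}\theta_\nu(x)$ subject to $c^\nu(x^\nu)\le 0$, where $\theta_\nu:\mathbb{R}^n\to\mathbb{R}$ and $c^\nu:\mathbb{R}^{n_\nu}\to\mathbb{R}^{r_\nu}$ are continuously differentiable (so each constraint function $c^\nu$ depends only on player $\nu$'s own variables). Let $c=(c^1,\ldots,c^N):\mathbb{R}^n\to\mathbb{R}^r$ be the concatenated constraint map and let $\bar x\in\mathbb{R}^n$. Then: (a) If $\bar x$ is feasible (i.e. $c(\bar x)\le 0$), then GNEP-CPLD holds in $\bar x$ if and only if $c$ satisfies (classical) CPLD in $\bar x$. (b) GNEP-EMFCQ holds in $\bar x$ if and only if $c$ satisfies (classical) EMFCQ in $\bar x$.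
   Context: Variables: $x=(x^1,\ldots,x^N)\in\mathbb{R}^n$ with $x^\nu\in\mathbb{R}^{n_\nu}$, $n=n_1+\cdots+n_N$, $r=r_1+\cdots+r_N$; one writes $x=(x^\nu,x^{-\nu})$. For a differentiable $f$, $\nabla f$ denotes the transposed Jacobian and $\nabla_{x^\nu} f$ the submatrix corresponding to the components $x^\nu$. Vectors $v_1,\dots,v_k$ are positively linearly dependent if $\sum_i\lambda_i v_i=0$ has a nontrivial solution with all $\lambda_i\ge 0$. CPLD$_\nu$ at a point $x$ with $c^\nu(x)\le0$: whenever the partial gradients $\nabla_{x^\nu}c_i^\nu(x)$, $i\in I$, are positively linearly dependent for some $I\subset\{i: c_i^\nu(x)=0\}$, the partial gradients $\nabla_{x^\nu}c_i^\nu(y)$, $i\in I$, are linearly dependent for all $y$ in a neighbourhood of $x$. GNEP-CPLD holds at $x$ if CPLD$_\nu$ holds at $x$ for every $\nu$. EMFCQ$_\nu$ at a point $x$ (not necessarily feasible): there is $d^\nu\in\mathbb{R}^{n_\nu}$ with $\nabla_{x^\nu}c_i^\nu(x)^Td^\nu<0$ for every $i$ with $c_i^\nu(x)\ge0$. GNEP-EMFCQ holds at $x$ if EMFCQ$_\nu$ holds at $x$ for every $\nu$. Classical CPLD for $c$ at a feasible $x$: whenever $\nabla c_i(x)$, $i\in I$, are positively linearly dependent for some subset $I$ of active indices $\{i:c_i(x)=0\}$, the full gradients $\nabla c_i(y)$, $i\in I$, are linearly dependent for all $y$ near $x$. Classical EMFCQ for $c$ at $x$: there is $d\in\mathbb{R}^n$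 with $\nabla c_i(x)^Td<0$ for every $i$ with $c_i(x)\ge 0$. *)

From HB Require Import structures.
From mathcomp Require Import all_boot all_order all_algebra.
From mathcomp Require Import all_classical all_reals all_analysis.
Set Implicit Arguments. Unset Strict Implicit. Unset Printing Implicit Defensive.
Import Order.TTheory GRing.Theory Num.Theory.
Import numFieldNormedType.Exports.
Local Open Scope ring_scope.

Section Defs.
Variable R : realType.

Definition unitv (m : nat) (j : 'I_m) : 'rV[R]_m := delta_mx 0 j.

Definition grad (m : nat) (f : 'rV[R]_m -> R) (x : 'rV[R]_m) : 'rV[R]_m :=
  \row_j ('D_(unitv j) f x).

Definition C1 (m : nat) (f : 'rV[R]_m -> R) : Prop :=
  (forall x, differentiable f x) /\
  (forall j : 'I_m, continuous (fun x => 'D_(unitv j) f x)).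

Definition C1v (m k : nat) (g : 'rV[R]_m -> 'rV[R]_k) : Prop :=
  forall i : 'I_k, C1 (fun x => g x 0 i).

Definition dotv (m : nat) (u v : 'rV[R]_m) : R := \sum_(j < m) u 0 j * v 0 j.

Definition pos_lin_dep (k m : nat) (I : {set 'I_k}) (v : 'I_k -> 'rV[R]_m) : Prop :=
  exists lam : 'I_k -> R,
    (forall i, i \in I -> 0 <= lam i) /\
    (exists2 i, i \in I & lam i != 0) /\
    \sum_(i in I) lam i *: v i = 0.

Definition lin_dep (k m : nat) (I : {set 'I_k}) (v : 'I_k -> 'rV[R]_m) : Prop :=
  exists lam : 'I_k -> R,
    (exists2 i, i \in I & lam i != 0) /\
    \sum_(i in I) lam i *: v i = 0.

Variables (N : nat) (n r : 'I_N -> nat).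

Definition nvar := (\sum_(nu < N) n nu)%N.
Definition ncon := (\sum_(nu < N) r nu)%N.

Definition blk (x : 'rV[R]_nvar) (nu : 'I_N) : 'rV[R]_(n nu) := submxrow x nu.

Definition concat_c (c : forall nu, 'rV[R]_(n nu) -> 'rV[R]_(r nu))
  (x : 'rV[R]_nvar) : 'rV[R]_ncon := mxrow (fun nu => c nu (blk x nu)).

Definition CPLD_nu (c : forall nu, 'rV[R]_(n nu) -> 'rV[R]_(r nu))
  (nu : 'I_N) (x : 'rV[R]_nvar) : Prop :=
  forall I : {set 'I_(r nu)},
    (forall i, i \in I -> c nu (blk x nu) 0 i = 0) ->
    pos_lin_dep I (fun i => grad (fun z => c nu z 0 i) (blk x nu)) ->
    \forall y \near x, lin_dep I (fun i => grad (fun z => c nu z 0 i) (blk y nu)).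

Definition GNEP_CPLD c x : Prop := forall nu, CPLD_nu c nu x.

Definition EMFCQ_nu (c : forall nu, 'rV[R]_(n nu) -> 'rV[R]_(r nu))
  (nu : 'I_N) (x : 'rV[R]_nvar) : Prop :=
  exists d : 'rV[R]_(n nu), forall i : 'I_(r nu),
    0 <= c nu (blk x nu) 0 i ->
    dotv (grad (fun z => c nu z 0 i) (blk x nu)) d < 0.

Definition GNEP_EMFCQ c x : Prop := forall nu, EMFCQ_nu c nu x.

End Defs.

Definition feasible (R : realType) (m k : nat) (g : 'rV[R]_m -> 'rV[R]_k) (x : 'rV[R]_m) :=
  forall i : 'I_k, g x 0 i <= 0.

Definition CPLD (R : realType) (m k : nat) (g : 'rV[R]_m -> 'rV[R]_k) (x : 'rV[R]_m) : Prop :=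
  forall I : {set 'I_k},
    (forall i, i \in I -> g x 0 i = 0) ->
    pos_lin_dep I (fun i => grad (fun z => g z 0 i) x) ->
    \forall y \near x, lin_dep I (fun i => grad (fun z => g z 0 i) y).

Definition EMFCQ (R : realType) (m k : nat) (g : 'rV[R]_m -> 'rV[R]_k) (x : 'rV[R]_m) : Prop :=
  exists d : 'rV[R]_m, forall i : 'I_k,
    0 <= g x 0 i -> dotv (grad (fun z => g z 0 i) x) d < 0.

From HB Require Import structures.
From mathcomp Require Import all_boot all_order all_algebra.
From mathcomp Require Import all_classical all_reals all_analysis.
Import Order.TTheory GRing.Theory Num.Theory.
Import numFieldNormedType.Exports.
Local Open Scope ring_scope.
Import tagnat.

(** The constraint of the concatenated map with index (nu, i) is c^nu_i(x^nu),
    so its full gradient is the partial gradient of c^nu_i placed in block nu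
    and zero in every other block.  Consequently a linear combination of
    such gradients vanishes iff it vanishes block by block, and a nonzero
    multiplier always lives in a single block: this moves (positive) linear
    dependence back and forth between c and the c^nu.  For EMFCQ, the inner
    product of that gradient with d only sees the block d^nu, so directions
    d^nu assemble into a direction d and conversely. *)

Section BlockIndices.
Context {N : nat} {n : 'I_N -> nat}.

Lemma Rank_inj nu : injective (@Rank N n nu).
Proof. by move=> a b /eqP; rewrite -val_eqE eq_Rank eqxx /= => /eqP/val_inj. Qed.

Lemma Rank_neq {mu nu} (a : 'I_(n mu)) (b : 'I_(n nu)) :
  mu != nu -> Rank mu a != Rank nu b.
Proof. by move=> neq_mu_nu; rewrite -val_eqE eq_Rank (negbTE neq_mu_nu). Qed.

Lemma Rank_surj k : exists nu (a : 'I_(n nu)), k = Rank nu a.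
Proof. by exists (sig1 k), (sig2 k); rewrite sig2K. Qed.

Lemma preimset_Rank_imset nu (J : {set 'I_(n nu)}) :
  Rank nu @^-1: (Rank nu @: J) = J.
Proof. by apply/setP => a; rewrite inE mem_imset //; apply: Rank_inj. Qed.

Lemma big_Rank (V : nmodType) (I : {set 'I_(\sum_nu n nu)})
    (F : 'I_(\sum_nu n nu) -> V) :
  \sum_(k in I) F k = \sum_nu \sum_(a in Rank nu @^-1: I) F (Rank nu a).
Proof.
rewrite (partition_big (@sig1 _ n) xpredT) //=; apply: eq_bigr => nu _.
rewrite -(big_imset _ (in2W (@Rank_inj nu))); apply: eq_bigl => k.
apply/andP/imsetP => [[kI /eqP sig1k]|[a]].
  by subst nu; exists (sig2 k); rewrite ?inE sig2K.
by rewrite inE => aI ->; rewrite Rank1K.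
Qed.

End BlockIndices.

Section Blocks.
Context {R : realType} {N : nat} {n : 'I_N -> nat}.
Implicit Types (x y v : 'rV[R]_(nvar n)) (nu mu : 'I_N).

Lemma blkE x nu i a : blk x nu i a = x 0 (Rank nu a).
Proof. by rewrite /blk /submxrow mxE [i]ord1. Qed.

Lemma blk0 nu : blk (0 : 'rV[R]_(nvar n)) nu = 0.
Proof. exact: submxrow0. Qed.

Lemma blk_scale_add (h : R) v x nu :
  blk (h *: v + x) nu = h *: blk v nu + blk x nu.
Proof. by apply/matrixP => i a; rewrite !mxE. Qed.

Lemma blk_sum (J : finType) (P : pred J) (lam : J -> R)
    (v : J -> 'rV[R]_(nvar n)) nu :
  blk (\sum_(j | P j) lam j *: v j) nu = \sum_(j | P j) lam j *: blk (v j) nu.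
Proof.
rewrite /blk submxrow_sum; apply: eq_bigr => j _.
by apply/matrixP => i a; rewrite !mxE.
Qed.

Lemma blk_eq0 v : (forall nu, blk v nu = 0) -> v = 0.
Proof. by move=> v0; apply/mxrowP => nu; rewrite submxrow0; apply: v0. Qed.

Lemma blk_unitv nu (a : 'I_(n nu)) : blk (unitv R (Rank nu a)) nu = unitv R a.
Proof.
apply/matrixP => i b; rewrite blkE !mxE [i]ord1 (inj_eq (@Rank_inj _ _ nu)).
by rewrite eqxx.
Qed.

Lemma blk_unitv_neq mu nu (a : 'I_(n mu)) :
  mu != nu -> blk (unitv R (Rank mu a)) nu = 0.
Proof.
move=> neq_mu_nu; apply/matrixP => i b; rewrite blkE !mxE.
by rewrite eq_sym in neq_mu_nu; rewrite (negbTE (Rank_neq b a neq_mu_nu)) andbF.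
Qed.

Lemma dotv_blk u v : dotv u v = \sum_nu dotv (blk u nu) (blk v nu).
Proof.
rewrite /dotv -big_set /= big_Rank; apply: eq_bigr => nu _.
by apply: eq_big => [a|a _]; rewrite ?inE // !blkE.
Qed.

Lemma derive_blk {W : normedModType R} nu (f : 'rV[R]_(n nu) -> W) v y :
  'D_v (fun z => f (blk z nu)) y = 'D_(blk v nu) f (blk y nu).
Proof.
by rewrite /derive; do 3 f_equal; apply: funext => h /=; rewrite blk_scale_add.
Qed.

End Blocks.

Lemma dotv0l (R : realType) m (v : 'rV[R]_m) : dotv 0 v = 0.
Proof. by rewrite /dotv big1 // => j _; rewrite mxE mul0r. Qed.

Section Concatenation.
Variables (R : realType) (N : nat) (n r : 'I_N -> nat)
  (c : forall nu : 'I_N, 'rV[R]_(n nu) -> 'rV[R]_(r nu)).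
Implicit Types (x y : 'rV[R]_(nvar n)) (nu mu : 'I_N).

Local Notation gradc y k := (grad (fun z => concat_c c z 0 k) y).
Local Notation gradp nu i w := (grad (fun z => c nu z 0 i) w).

Lemma concat_cE x nu (i : 'I_(r nu)) :
  concat_c c x 0 (Rank nu i) = c nu (blk x nu) 0 i.
Proof.
have := congr1 (fun A : 'rV[R]_(r nu) => A 0 i)
  (mxrowK (fun nu => c nu (blk x nu)) nu).
by rewrite /submxrow mxE.
Qed.

Lemma blk_grad_concat y nu (i : 'I_(r nu)) :
  blk (gradc y (Rank nu i)) nu = gradp nu i (blk y nu).
Proof.
apply/matrixP => j a; rewrite blkE !mxE.
under eq_fun do rewrite concat_cE.
by rewrite (derive_blk nu (fun w => c nu w 0 i)) blk_unitv.
Qed.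

Lemma blk_grad_concat_neq y mu nu (i : 'I_(r nu)) :
  mu != nu -> blk (gradc y (Rank nu i)) mu = 0.
Proof.
move=> neq_mu_nu; apply/matrixP => j a; rewrite blkE !mxE.
under eq_fun do rewrite concat_cE.
rewrite (derive_blk nu (fun w => c nu w 0 i)).
by rewrite blk_unitv_neq ?derive0 // eq_sym.
Qed.

Lemma dotv_grad_concat y nu (i : 'I_(r nu)) d :
  dotv (gradc y (Rank nu i)) d = dotv (gradp nu i (blk y nu)) (blk d nu).
Proof.
rewrite dotv_blk (bigD1 nu) //= blk_grad_concat big1 ?addr0 // => mu neq_mu_nu.
by rewrite blk_grad_concat_neq // dotv0l.
Qed.

Lemma blk_comb_grad_concat (I : {set 'I_(ncon r)}) (lam : 'I_(ncon r) -> R) y mu :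
  blk (\sum_(k in I) lam k *: gradc y k) mu =
  \sum_(i in Rank mu @^-1: I) lam (Rank mu i) *: gradp mu i (blk y mu).
Proof.
rewrite blk_sum big_Rank (bigD1 mu) //= [X in _ + X]big1 ?addr0.
  by apply: eq_bigr => i _; rewrite blk_grad_concat.
move=> nu neq_nu_mu; rewrite big1 // => i _.
by rewrite blk_grad_concat_neq ?scaler0 // eq_sym.
Qed.

(* At most one i has Rank nu i = k, so this is m on block nu and 0 elsewhere. *)
Definition coef_embed {nu} (m : 'I_(r nu) -> R) (k : 'I_(ncon r)) : R :=
  \sum_(i | Rank nu i == k) m i.

Lemma coef_embedE nu (m : 'I_(r nu) -> R) (i : 'I_(r nu)) :
  coef_embed m (Rank nu i) = m i.
Proof.
by rewrite /coef_embed (big_pred1 i) // => j; rewrite /= (inj_eq (@Rank_inj _ _ nu)).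
Qed.

Lemma coef_embed_neq nu mu (m : 'I_(r nu) -> R) (j : 'I_(r mu)) :
  mu != nu -> coef_embed m (Rank mu j) = 0.
Proof.
move=> neq_mu_nu; apply: big_pred0 => i /=.
by apply/negbTE; apply: Rank_neq; rewrite eq_sym.
Qed.

Lemma comb_grad_concat_embed (I : {set 'I_(ncon r)}) nu (m : 'I_(r nu) -> R) y :
  \sum_(i in Rank nu @^-1: I) m i *: gradp nu i (blk y nu) = 0 ->
  \sum_(k in I) coef_embed m k *: gradc y k = 0.
Proof.
move=> comb0; apply: blk_eq0 => mu; rewrite blk_comb_grad_concat.
have [<-|neq_nu_mu] := eqVneq nu mu.
  by rewrite -[RHS]comb0; apply: eq_bigr => i _; rewrite coef_embedE.
by rewrite big1 // => i _; rewrite coef_embed_neq ?scale0r // eq_sym.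
Qed.

Lemma pos_lin_dep_grad_concat (I : {set 'I_(ncon r)}) y :
  pos_lin_dep I (fun k => gradc y k) ->
  exists nu, pos_lin_dep (Rank nu @^-1: I) (fun i => gradp nu i (blk y nu)).
Proof.
move=> [lam [lam_ge0 [[k kI lamk_neq0] comb0]]].
have [nu [i eq_k]] := Rank_surj k; subst k.
exists nu, (fun i => lam (Rank nu i)).
split; first by move=> j; rewrite inE => /lam_ge0.
split; first by exists i; rewrite ?inE.
by rewrite -blk_comb_grad_concat comb0 blk0.
Qed.

Lemma pos_lin_dep_grad_embed (I : {set 'I_(ncon r)}) nu y :
  pos_lin_dep (Rank nu @^-1: I) (fun i => gradp nu i (blk y nu)) ->
  pos_lin_dep I (fun k => gradc y k).
Proof.
move=> [m [m_ge0 [[i iI mi_neq0] comb0]]].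
exists (coef_embed m); split; last split.
- move=> k; have [mu [j ->]] := Rank_surj k => jI.
  have [eq_mu_nu|neq_mu_nu] := eqVneq mu nu; last by rewrite coef_embed_neq.
  by subst mu; rewrite coef_embedE m_ge0 ?inE.
- by exists (Rank nu i); rewrite ?coef_embedE //; rewrite inE in iI.
- exact: comb_grad_concat_embed.
Qed.

Lemma lin_dep_grad_embed (I : {set 'I_(ncon r)}) nu y :
  lin_dep (Rank nu @^-1: I) (fun i => gradp nu i (blk y nu)) ->
  lin_dep I (fun k => gradc y k).
Proof.
move=> [m [[i iI mi_neq0] comb0]]; exists (coef_embed m); split.
  by exists (Rank nu i); rewrite ?coef_embedE //; rewrite inE in iI.
exact: comb_grad_concat_embed.
Qed.

Lemma lin_dep_grad_concat_imset nu (J : {set 'I_(r nu)}) y :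
  lin_dep (Rank nu @: J) (fun k => gradc y k) ->
  lin_dep J (fun i => gradp nu i (blk y nu)).
Proof.
move=> [lam [[k /imsetP [i iJ ->] lamk_neq0] comb0]].
exists (fun i => lam (Rank nu i)); split; first by exists i.
by rewrite -[J](preimset_Rank_imset nu J) -blk_comb_grad_concat comb0 blk0.
Qed.

Lemma GNEP_CPLD_CPLD x : GNEP_CPLD c x -> CPLD (concat_c c) x.
Proof.
move=> gnep_cpld I I_active /pos_lin_dep_grad_concat [nu pld].
have nu_active i : i \in Rank nu @^-1: I -> c nu (blk x nu) 0 i = 0.
  by rewrite inE => /I_active; rewrite concat_cE.
by apply: filterS (gnep_cpld nu _ nu_active pld) => y; apply: lin_dep_grad_embed.
Qed.

Lemma CPLD_GNEP_CPLD x : CPLD (concat_c c) x -> GNEP_CPLD c x.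
Proof.
move=> cpld nu J J_active pld.
have I_active k : k \in Rank nu @: J -> concat_c c x 0 k = 0.
  by move=> /imsetP [i iJ ->]; rewrite concat_cE J_active.
rewrite -(preimset_Rank_imset nu J) in pld; move/pos_lin_dep_grad_embed: pld => pld.
apply: filterS (cpld _ I_active pld) => y.
exact: lin_dep_grad_concat_imset.
Qed.

Lemma GNEP_EMFCQ_EMFCQ x : GNEP_EMFCQ c x -> EMFCQ (concat_c c) x.
Proof.
move=> gnep_emfcq; pose d nu := projT1 (cid (gnep_emfcq nu)).
exists (\mxrow_nu d nu) => k; have [nu [i ->]] := Rank_surj k.
rewrite concat_cE dotv_grad_concat /blk mxrowK.
exact: (projT2 (cid (gnep_emfcq nu))).
Qed.

Lemma EMFCQ_GNEP_EMFCQ x : EMFCQ (concat_c c) x -> GNEP_EMFCQ c x.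
Proof.
move=> [d d_descent] nu; exists (blk d nu) => i c_ge0.
by rewrite -dotv_grad_concat; apply: d_descent; rewrite concat_cE.
Qed.

End Concatenation.

Theorem theorem2p5 (R : realType) (N : nat) (n r : 'I_N -> nat)
  (theta : 'I_N -> 'rV[R]_(nvar n) -> R)
  (c : forall nu : 'I_N, 'rV[R]_(n nu) -> 'rV[R]_(r nu))
  (Htheta : forall nu, C1 (theta nu))
  (Hc : forall nu, C1v (c nu))
  (xbar : 'rV[R]_(nvar n)) :
  (feasible (concat_c c) xbar ->
     (GNEP_CPLD c xbar <-> CPLD (concat_c c) xbar)) /\
  (GNEP_EMFCQ c xbar <-> EMFCQ (concat_c c) xbar).
Proof.
split; first (move=> _; split).
- exact: GNEP_CPLD_CPLD.
- exact: CPLD_GNEP_CPLD.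
- split; [exact: GNEP_EMFCQ_EMFCQ | exact: EMFCQ_GNEP_EMFCQ].
Qed.
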